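(* The group $\operatorname{IET}^{\bowtie}$ is generated by the images of flips.
   Context: $X=[0,1[$. $\widehat{\operatorname{IET}^{\bowtie}}$ is the group of bijections $f:X\to X$ for which there is a finite partition of $X$ into intervals $[a,b[$ such that on each open interval $]a,b[$, $f$ is of the form $x\mapsto x+c$ or $x\mapsto -x+c$. ${\mathfrak S}_{\mathrm{fin}}$ is its normal subgroup of finitely supported permutations and $\operatorname{IET}^{\bowtie}=\widehat{\operatorname{IET}^{\bowtie}}/{\mathfrak S}_{\mathrm{fin}}$. For a nonempty interval $I=[a,b[\subseteq X$, the $I$-flip is the bijection of $X$ mapping $x\mapsto a+b-x$ on $]a,b[$ and fixing every other point; a flip is an $I$-flip for some such $I$, and ''images of flips'' means their images in $\operatorname{IET}^{\bowtie}$. *)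

From Stdlib Require Import Reals List.
Open Scope R_scope.

Definition inX (x : R) : Prop := 0 <= x < 1.

(* An element of \widehat{IET^bowtie}: a function R -> R whose restriction to X
   is a bijection X -> X, and such that there is a finite partition
   0 = p 0 < p 1 < ... < p n = 1 of X into intervals [p i, p (i+1)[ on each
   open interval ]p i, p (i+1)[ of which f is x |-> x + c or x |-> -x + c.
   (Values of f outside X are irrelevant.) *)
Definition IET_hat (f : R -> R) : Prop :=
  (forall x, inX x -> inX (f x)) /\
  (forall x y, inX x -> inX y -> f x = f y -> x = y) /\
  (forall y, inX y -> exists x, inX x /\ f x = y) /\
  exists (n : nat) (p : nat -> R),
    p 0%nat = 0 /\ p n = 1 /\
    (forall i, (i < n)%nat -> p i < p (S i)) /\
    (forall i, (i < n)%nat -> exists c : R,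
        (forall x, p i < x < p (S i) -> f x = x + c) \/
        (forall x, p i < x < p (S i) -> f x = - x + c)).

Definition flip (a b : R) (x : R) : R :=
  if Rlt_dec a x then (if Rlt_dec x b then a + b - x else x) else x.

Definition flip_interval (ab : R * R) : Prop :=
  0 <= fst ab /\ fst ab < snd ab /\ snd ab <= 1.

(* Composition of the flips listed: [I1; I2; ...; Ik] gives flip_I1 o flip_I2 o ... o flip_Ik *)
Definition flip_word (w : list (R * R)) : R -> R :=
  fold_right (fun ab g => fun x => flip (fst ab) (snd ab) (g x)) (fun x => x) w.

(* f and g agree on X up to finitely many points, i.e. they have the same
   image in IET^bowtie = \widehat{IET^bowtie} / S_fin. *)
Definition eq_mod_fin (f g : R -> R) : Prop :=
  exists l : list R, forall x, inX x -> f x <> g x -> In x l.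

From Stdlib Require Import Reals RList List Compare_dec Lra Lia ClassicalEpsilon.
Open Scope R_scope.

(* Suppose f is a bijection of X that is an
   isometry on each of k pieces of [0,L[ and (up to finitely many points) the
   identity on [L,1[.  Some piece [a,b[ must be mapped onto the top interval
   [L-(b-a),L[: otherwise the points just below L would have no preimage.  The
   product of flips  rot = flip[a,b[ o flip[b,L[ o flip[a,L[  (the first factor
   only when f preserves orientation on [a,b[) maps [L-(b-a),L[ onto [a,b[ and
   translates [a,L-(b-a)[ onto [b,L[, so f o rot has k-1 pieces on [0,L-(b-a)[
   and is the identity on [L-(b-a),L[.  Flips being involutions, the inverse of
   rot is the reversed product of flips. *)

Ltac destruct_flips :=
  unfold flip; repeat match goal with |- context [Rlt_dec ?u ?v] => destruct (Rlt_dec u v) end.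

Lemma flip_involutive a b x : flip a b (flip a b x) = x.
Proof. destruct_flips; lra. Qed.

Lemma flip_degenerate a b x : b <= a -> flip a b x = x.
Proof. intros; destruct_flips; lra. Qed.

Lemma flip_inX a b x : 0 <= a -> b <= 1 -> inX x -> inX (flip a b x).
Proof. unfold inX; intros; destruct_flips; lra. Qed.

Definition weak_flip_interval (ab : R * R) : Prop := 0 <= fst ab <= snd ab /\ snd ab <= 1.

Lemma flip_word_app w1 w2 x : flip_word (w1 ++ w2) x = flip_word w1 (flip_word w2 x).
Proof. induction w1 as [|ab w1 IH]; simpl; [reflexivity|now rewrite IH]. Qed.

Lemma flip_word_rev_cancel w x : flip_word (rev w) (flip_word w x) = x.
Proof.
  induction w as [|ab w IH]; simpl; [reflexivity|].
  rewrite flip_word_app; simpl. now rewrite flip_involutive.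
Qed.

Lemma flip_word_cancel_rev w x : flip_word w (flip_word (rev w) x) = x.
Proof. rewrite <- (rev_involutive w) at 1. apply flip_word_rev_cancel. Qed.

Lemma flip_word_inX w x : Forall weak_flip_interval w -> inX x -> inX (flip_word w x).
Proof.
  intros Hw Hx; induction Hw as [|ab w Hab _ IH]; simpl; [exact Hx|].
  apply flip_inX; [apply Hab..|exact IH].
Qed.

Lemma nondegenerate_flip_word w : Forall weak_flip_interval w ->
  exists w', Forall flip_interval w' /\ forall x, flip_word w' x = flip_word w x.
Proof.
  induction 1 as [|ab w Hab _ [w' [Hw' Hww']]].
  - exists nil; split; [constructor|reflexivity].
  - destruct (Rlt_dec (fst ab) (snd ab)) as [Hlt|Hge].
    + exists (ab :: w'); split.
      * constructor; [unfold flip_interval, weak_flip_interval in *; lra|exact Hw'].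
      * intros x; simpl; now rewrite Hww'.
    + exists w'; split; [exact Hw'|].
      intros x; simpl; rewrite flip_degenerate by lra; apply Hww'.
Qed.

Definition bijective_on_X (f : R -> R) : Prop :=
  (forall x, inX x -> inX (f x)) /\
  (forall x y, inX x -> inX y -> f x = f y -> x = y) /\
  (forall y, inX y -> exists x, inX x /\ f x = y).

Lemma bijective_on_X_comp_flip_word f w : Forall weak_flip_interval w ->
  bijective_on_X f -> bijective_on_X (fun x => f (flip_word w x)).
Proof.
  intros Hw (Hmaps & Hinj & Hsurj); split; [|split].
  - intros x Hx; apply Hmaps, flip_word_inX; assumption.
  - intros x y Hx Hy Hxy.
    rewrite <- (flip_word_rev_cancel w x), <- (flip_word_rev_cancel w y).
    f_equal; apply Hinj; try apply flip_word_inX; assumption.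
  - intros y Hy; destruct (Hsurj y Hy) as [z [Hz <-]].
    exists (flip_word (rev w) z); split.
    + apply flip_word_inX; [apply Forall_rev|]; assumption.
    + now rewrite flip_word_cancel_rev.
Qed.

Lemma eq_mod_fin_flip_word_comp f w w0 : Forall weak_flip_interval w0 ->
  eq_mod_fin (fun y => f (flip_word w0 y)) (flip_word w) ->
  eq_mod_fin f (flip_word (w ++ rev w0)).
Proof.
  intros Hw0 [l Hl]; exists (map (flip_word w0) l); intros x Hx Hne.
  rewrite <- (flip_word_cancel_rev w0 x); apply in_map, Hl.
  - apply flip_word_inX; [apply Forall_rev|]; assumption.
  - now rewrite flip_word_cancel_rev, <- flip_word_app.
Qed.

Lemma exists_between_notin (l : list R) u v : u < v -> exists y, u < y < v /\ ~ In y l.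
Proof.
  revert u v; induction l as [|a l IH]; intros u v Huv.
  - exists ((u + v) / 2); split; [lra|auto].
  - destruct (IH u v Huv) as [y [Hy Hyl]].
    destruct (Req_dec y a) as [->|Hya].
    + destruct (IH u a (proj1 Hy)) as [z [Hz Hzl]].
      exists z; split; [lra|]; intros [->|Hin]; [lra|auto].
    + exists y; split; [exact Hy|]; intros [->|Hin]; auto.
Qed.

Section IncreasingBreakpoints.
Context {k : nat} {p : nat -> R}.
Hypothesis Hincr : forall j, (j < k)%nat -> p j < p (S j).

Lemma incr_lt i j : (i < j <= k)%nat -> p i < p j.
Proof.
  induction j as [|j IH]; intros Hij; [lia|].
  destruct (Nat.eq_dec i j) as [->|Hne]; [apply Hincr; lia|].
  apply Rlt_trans with (p j); [apply IH|apply Hincr]; lia.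
Qed.

Lemma incr_le i j : (i <= j <= k)%nat -> p i <= p j.
Proof.
  intros Hij; destruct (Nat.eq_dec i j) as [->|Hne]; [lra|].
  left; apply incr_lt; lia.
Qed.

Lemma incr_locate x : p 0%nat <= x < p k ->
  exists j, (j < k)%nat /\ (x = p j \/ p j < x < p (S j)).
Proof.
  clear -Hincr; induction k as [|n IH]; intros Hx; [lra|].
  destruct (Rlt_le_dec x (p n)) as [Hlt|Hge].
  - destruct IH as [j [Hj Hjx]]; [intros; apply Hincr; lia|lra|].
    exists j; split; [lia|exact Hjx].
  - exists n; split; [lia|].
    destruct (Req_dec x (p n)); [left|right]; lra.
Qed.

End IncreasingBreakpoints.

Record iet_below (k : nat) (L : R) (p c : nat -> R) (s : nat -> bool) (f : R -> R) : Prop := {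
  ib_L_le_1 : L <= 1;
  ib_start : p 0%nat = 0;
  ib_end : p k = L;
  ib_incr : forall j, (j < k)%nat -> p j < p (S j);
  ib_piece : forall j, (j < k)%nat -> forall x, p j < x < p (S j) ->
    f x = (if s j then x else - x) + c j;
  ib_id_above : exists l, forall x, L < x < 1 -> ~ In x l -> f x = x;
  ib_bij : bijective_on_X f }.

Arguments ib_L_le_1 {k L p c s f}.
Arguments ib_start {k L p c s f}.
Arguments ib_end {k L p c s f}.
Arguments ib_incr {k L p c s f}.
Arguments ib_piece {k L p c s f}.
Arguments ib_id_above {k L p c s f}.
Arguments ib_bij {k L p c s f}.

Definition image_end (p c : nat -> R) (s : nat -> bool) (j : nat) : R :=
  if s j then p (S j) + c j else c j - p j.

Section TopPiece.
Context {k : nat} {L : R} {p c : nat -> R} {s : nat -> bool} {f : R -> R}.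
Hypothesis G : iet_below k L p c s f.

Lemma piece_in_prefix j : (j < k)%nat -> 0 <= p j /\ p (S j) <= L.
Proof.
  intros Hj; rewrite <- (ib_start G), <- (ib_end G).
  split; apply (incr_le (ib_incr G)); lia.
Qed.

Lemma piece_image_lt j x : (j < k)%nat -> p j < x < p (S j) -> f x < image_end p c s j.
Proof.
  intros Hj Hx; rewrite (ib_piece G j Hj x Hx); unfold image_end.
  destruct (s j); lra.
Qed.

Lemma piece_image_onto j y : (j < k)%nat ->
  image_end p c s j - (p (S j) - p j) < y < image_end p c s j ->
  exists x, p j < x < p (S j) /\ f x = y.
Proof.
  intros Hj Hy; unfold image_end in Hy; destruct (s j) eqn:Hs.
  - assert (Hx : p j < y - c j < p (S j)) by lra.
    exists (y - c j); split; [exact Hx|].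
    rewrite (ib_piece G j Hj _ Hx), Hs; ring.
  - assert (Hx : p j < c j - y < p (S j)) by lra.
    exists (c j - y); split; [exact Hx|].
    rewrite (ib_piece G j Hj _ Hx), Hs; ring.
Qed.

(* A point of ]L, image_end j[ close to image_end j would be the image of a
   point of the piece and, outside finitely many exceptions, fixed by f. *)
Lemma image_end_le_L j : (j < k)%nat -> image_end p c s j <= L.
Proof.
  intros Hj; destruct (Rle_lt_dec (image_end p c s j) L) as [|Hgt]; [assumption|exfalso].
  destruct (piece_in_prefix j Hj) as [Hpj HpSj].
  destruct (ib_id_above G) as [l Hl].
  destruct (ib_bij G) as (Hmaps & Hinj & _).
  set (r := image_end p c s j) in *.
  set (u := Rmax L (r - (p (S j) - p j))).
  assert (Hu : L <= u /\ r - (p (S j) - p j) <= u) by (split; [apply Rmax_l|apply Rmax_r]).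
  destruct (exists_between_notin l u r) as [y [Hy Hyl]].
  { apply Rmax_lub_lt; [lra|pose proof (ib_incr G j Hj); lra]. }
  destruct (piece_image_onto j y Hj) as [x [Hx Hfx]]; [fold r; lra|].
  assert (HxX : inX x) by (pose proof (ib_L_le_1 G); unfold inX; lra).
  assert (HyX : inX y) by (rewrite <- Hfx; apply Hmaps, HxX).
  assert (Hfy : f y = y) by (apply Hl; [unfold inX in HyX; lra|exact Hyl]).
  assert (x = y) by (apply Hinj; [exact HxX|exact HyX|congruence]).
  lra.
Qed.

Lemma exists_top_piece : (0 < k)%nat -> exists i, (i < k)%nat /\ image_end p c s i = L.
Proof.
  intros Hk; apply NNPP; intros Hnone.
  set (ends := map (image_end p c s) (seq 0 k)).
  assert (Hends : forall j, (j < k)%nat -> image_end p c s j <= MaxRlist ends).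
  { intros j Hj; apply MaxRlist_P1, in_map, in_seq; lia. }
  assert (HM : MaxRlist ends < L).
  { destruct (in_map_iff (image_end p c s) (seq 0 k) (MaxRlist ends)) as [[j [Hj Hjk]] _].
    { apply MaxRlist_P2; exists (image_end p c s 0); apply in_map, in_seq; lia. }
    apply in_seq in Hjk; rewrite <- Hj.
    destruct (Rle_lt_or_eq_dec _ _ (image_end_le_L j ltac:(lia))) as [|Heq]; [assumption|].
    exfalso; apply Hnone; exists j; split; [lia|exact Heq]. }
  assert (HL : 0 < L) by (rewrite <- (ib_start G), <- (ib_end G); apply (incr_lt (ib_incr G)); lia).
  destruct (ib_id_above G) as [l Hl].
  destruct (ib_bij G) as (_ & _ & Hsurj).
  assert (Hmax := Rmax_l (MaxRlist ends) 0); assert (Hmax0 := Rmax_r (MaxRlist ends) 0).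
  destruct (exists_between_notin (map f (L :: l ++ map p (seq 0 k))) (Rmax (MaxRlist ends) 0) L)
    as [y [Hy Hyf]]; [apply Rmax_lub_lt; lra|].
  destruct (Hsurj y) as [x [Hx Hfx]]; [pose proof (ib_L_le_1 G); unfold inX; lra|].
  apply Hyf; rewrite <- Hfx; apply in_map.
  destruct (Rlt_le_dec x L) as [HxL|HLx].
  - destruct (incr_locate (ib_incr G) x) as [j [Hj [->|Hxj]]];
      [rewrite (ib_start G), (ib_end G); unfold inX in Hx; lra| |].
    + right; apply in_or_app; right; apply in_map, in_seq; lia.
    + pose proof (piece_image_lt j x Hj Hxj); pose proof (Hends j Hj); lra.
  - destruct (Req_dec x L) as [->|HneL]; [left; reflexivity|right; apply in_or_app; left].
    apply NNPP; intros Hxl; unfold inX in Hx.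
    rewrite (Hl x) in Hfx by (assumption || lra); lra.
Qed.

End TopPiece.

Definition rotation_word (a b L : R) (t : bool) : list (R * R) :=
  (if t then (a, b) :: nil else nil) ++ (b, L) :: (a, L) :: nil.

Section Rotation.
Variables (a b L : R) (t : bool).
Hypothesis Hab : a < b.
Hypothesis HbL : b <= L.

Lemma rotation_below y : y <= a -> flip_word (rotation_word a b L t) y = y.
Proof. intros; destruct t; simpl; destruct_flips; lra. Qed.

Lemma rotation_above y : L <= y -> flip_word (rotation_word a b L t) y = y.
Proof. intros; destruct t; simpl; destruct_flips; lra. Qed.

Lemma rotation_shift y : a < y < L - (b - a) ->
  flip_word (rotation_word a b L t) y = y + (b - a).
Proof. intros; destruct t; simpl; destruct_flips; lra. Qed.

Lemma rotation_top y : L - (b - a) < y < L ->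
  flip_word (rotation_word a b L t) y = if t then y - L + b else a + L - y.
Proof. intros; destruct t; simpl; destruct_flips; lra. Qed.

End Rotation.

Lemma rotation_word_weak a b L t : 0 <= a <= b -> b <= L <= 1 ->
  Forall weak_flip_interval (rotation_word a b L t).
Proof.
  intros; unfold rotation_word, weak_flip_interval.
  destruct t; simpl; repeat (apply Forall_cons; [simpl; lra|]); apply Forall_nil.
Qed.

Section RemoveTopPiece.
Context {k : nat} {L : R} {p c : nat -> R} {s : nat -> bool} {f : R -> R} {i : nat}.
Hypothesis G : iet_below (S k) L p c s f.
Hypothesis Hi : (i < S k)%nat.
Hypothesis Htop : image_end p c s i = L.

Let a := p i.
Let b := p (S i).
Let rot := flip_word (rotation_word a b L (s i)).
Let p' (j : nat) : R := if le_lt_dec j i then p j else p (S j) - (b - a).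
Let c' (j : nat) : R := if lt_dec j i then c j else c (S j) + (if s (S j) then b - a else a - b).
Let s' (j : nat) : bool := if lt_dec j i then s j else s (S j).

Lemma ab_in_prefix : 0 <= a < b /\ b <= L.
Proof. pose proof (piece_in_prefix G i Hi); pose proof (ib_incr G i Hi); unfold a, b; lra. Qed.

Lemma rotated_breakpoint_low j : (j <= i)%nat -> p' j = p j.
Proof. intros; unfold p'; destruct (le_lt_dec j i); [reflexivity|lia]. Qed.

Lemma rotated_breakpoint_high j : (i <= j)%nat -> p' j = p (S j) - (b - a).
Proof.
  intros; unfold p'; destruct (le_lt_dec j i); [|reflexivity].
  replace j with i by lia; unfold a, b; ring.
Qed.

Lemma rotated_incr j : (j < k)%nat -> p' j < p' (S j).
Proof.
  intros Hj; destruct (lt_dec j i).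
  - rewrite !rotated_breakpoint_low by lia; apply (ib_incr G); lia.
  - rewrite !rotated_breakpoint_high by lia.
    assert (p (S j) < p (S (S j))) by (apply (ib_incr G); lia); lra.
Qed.

Lemma rotated_piece j : (j < k)%nat -> forall y, p' j < y < p' (S j) ->
  f (rot y) = (if s' j then y else - y) + c' j.
Proof.
  intros Hj y Hy; pose proof ab_in_prefix; unfold s', c', rot.
  destruct (lt_dec j i) as [Hji|Hji].
  - rewrite !rotated_breakpoint_low in Hy by lia.
    assert (p (S j) <= a) by (apply (incr_le (ib_incr G)); lia).
    rewrite rotation_below by lra; apply (ib_piece G); [lia|exact Hy].
  - rewrite !rotated_breakpoint_high in Hy by lia.
    assert (b <= p (S j)) by (apply (incr_le (ib_incr G)); lia).
    assert (p (S (S j)) <= L) by (apply (piece_in_prefix G); lia).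
    rewrite rotation_shift, (ib_piece G (S j)) by lra || lia.
    destruct (s (S j)); ring.
Qed.

Lemma rotated_top_fixed y : L - (b - a) < y < L -> f (rot y) = y.
Proof.
  intros Hy; pose proof ab_in_prefix; unfold rot; rewrite rotation_top by lra.
  unfold image_end in Htop; fold a b in Htop.
  destruct (s i) eqn:Hs; rewrite (ib_piece G i Hi), Hs; fold a b; lra.
Qed.

Lemma rotated_id_above : exists l, forall y, L - (b - a) < y < 1 -> ~ In y l -> f (rot y) = y.
Proof.
  destruct (ib_id_above G) as [l Hl]; exists (L :: l); intros y Hy Hyl.
  pose proof ab_in_prefix.
  destruct (Rlt_le_dec y L) as [HyL|HLy]; [apply rotated_top_fixed; lra|].
  unfold rot; rewrite rotation_above by lra.
  apply Hl; [|intros Hin; apply Hyl; right; exact Hin].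
  destruct (Req_dec y L) as [->|]; [exfalso; apply Hyl; left; reflexivity|lra].
Qed.

Lemma iet_below_remove_top_piece :
  exists p' c' s', iet_below k (L - (b - a)) p' c' s' (fun y => f (rot y)).
Proof.
  pose proof ab_in_prefix; pose proof (ib_L_le_1 G).
  exists p', c', s'; split.
  - lra.
  - rewrite rotated_breakpoint_low by lia; apply (ib_start G).
  - destruct (Nat.eq_dec i k) as [Hik|].
    + rewrite rotated_breakpoint_low by lia; unfold a, b; rewrite Hik, (ib_end G); ring.
    + rewrite rotated_breakpoint_high by lia; rewrite (ib_end G); ring.
  - exact rotated_incr.
  - exact rotated_piece.
  - exact rotated_id_above.
  - apply bijective_on_X_comp_flip_word; [apply rotation_word_weak; lra|apply (ib_bij G)].
Qed.

End RemoveTopPiece.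

Lemma iet_below_flip_word k : forall L p c s f, iet_below k L p c s f ->
  exists w, Forall weak_flip_interval w /\ eq_mod_fin f (flip_word w).
Proof.
  induction k as [|k IH]; intros L p c s f G.
  - exists nil; split; [constructor|].
    destruct (ib_id_above G) as [l Hl]; exists (0 :: l); intros x Hx Hne.
    assert (HL : L = 0) by (rewrite <- (ib_end G); apply (ib_start G)).
    destruct (Req_dec x 0) as [->|Hx0]; [left; reflexivity|right].
    assert (0 < x) by (destruct Hx as [[Hpos|Hzero] _]; [exact Hpos|congruence]).
    apply NNPP; intros Hxl; apply Hne, (Hl x); [unfold inX in Hx; lra|exact Hxl].
  - destruct (exists_top_piece G) as [i [Hi Htop]]; [lia|].
    destruct (iet_below_remove_top_piece G Hi Htop) as (p' & c' & s' & G').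
    destruct (IH _ _ _ _ _ G') as [w [Hw Hfw]].
    pose proof (piece_in_prefix G i Hi); pose proof (ib_incr G i Hi); pose proof (ib_L_le_1 G).
    exists (w ++ rev (rotation_word (p i) (p (S i)) L (s i))); split.
    + apply Forall_app; split; [exact Hw|apply Forall_rev, rotation_word_weak; lra].
    + apply eq_mod_fin_flip_word_comp; [apply rotation_word_weak; lra|exact Hfw].
Qed.

Lemma IET_hat_iet_below f : IET_hat f -> exists n p c s, iet_below n 1 p c s f.
Proof.
  intros (Hmaps & Hinj & Hsurj & n & p & Hp0 & Hpn & Hincr & Hpieces).
  destruct (choice (fun j (cs : R * bool) => (j < n)%nat -> forall x, p j < x < p (S j) ->
                      f x = (if snd cs then x else - x) + fst cs)) as [cs Hcs].
  { intros j; destruct (lt_dec j n) as [Hj|Hj]; [|exists (0, true); lia].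
    destruct (Hpieces j Hj) as [c0 [Htr|Hrefl]];
      [exists (c0, true)|exists (c0, false)]; intros _ x Hx; simpl; auto. }
  exists n, p, (fun j => fst (cs j)), (fun j => snd (cs j)); split.
  - lra.
  - exact Hp0.
  - exact Hpn.
  - exact Hincr.
  - exact Hcs.
  - exists nil; intros x Hx; lra.
  - exact (conj Hmaps (conj Hinj Hsurj)).
Qed.

Theorem lemma4p8 :
  forall f : R -> R, IET_hat f ->
    exists w : list (R * R),
      Forall flip_interval w /\ eq_mod_fin f (flip_word w).
Proof.
  intros f Hf.
  destruct (IET_hat_iet_below f Hf) as (n & p & c & s & G).
  destruct (iet_below_flip_word n 1 p c s f G) as (w & Hw & [l Hl]).
  destruct (nondegenerate_flip_word w Hw) as (w' & Hw' & Hww').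
  exists w'; split; [exact Hw'|].
  exists l; intros x Hx; rewrite Hww'; apply Hl, Hx.
Qed.
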